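(* Let $(D,D_{t'})$ be a proper pair (with $t'\geq 1$) such that the unrolled DAG $D_{t'}$ has no contemporaneous edges, and assume that the $d$-separation Markov property holds in $D_{t'}$ for the time series with baseline variables $X$ with index sets $(V,W)$. Let $A,B,C\subseteq V\cup W$ be pairwise disjoint with $B\subseteq V$. If $B$ is $\delta$-separated from $A$ given $C$ in $D$, then $X^B$ is locally independent of $X^A$ given $X^C$ until time $t'$.
   Context: Time series with baseline variables: $V$ and $W$ are finite disjoint index sets. $X=\{X_t\}_{t\ge 0}$ is a stochastic process such that $X_0$ is a random vector with entries indexed by $V\cup W$ (coordinate processes at time $0$ together with baseline variables) and, for $t\geq 1$, $X_t$ is a random vector with entries indexed by $V$. For $A\subseteq V\cup W$, $X_t^A$ is the subvector indexed by $A$ and $\overline X_t^A=\{X_s^i: i\in A, s\le t\}$ (a baseline variable $i\in W$ only appears at $s=0$). Local independence (Granger non-causality): for pairwise disjoint $A,B,C\subseteq V\cup W$ with $B\subseteq V$, $X^B$ is locally independent of $X^A$ given $X^C$ until time $t'$ if for every $t=1,\dots,t'$, $\overline X^A_{t-1}$ and $X^B_t$ are conditionally independent given $\overline X^{B\cup C}_{t-1}$. Graphs: a directed graph (DG) has node set and directed edges $i\to j$ (at most one edge from $i$ to $j$; both $i\to j$ and $j\to i$ may occur; self-loops allowed). A walk is an alternating sequence of nodes and edges with each edge between consecutive nodes; a path is a walk with no repeated node. A non-endpoint node $k$ on a path is a collider if both adjacent edges have heads at $k$ ($\to k\leftarrow$), otherwise a noncollider. $\mathrm{an}(C)$ is the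 set of nodes $k$ having a directed path to some node of $C$ with $k\ne$ that node; $\mathrm{an}^{+}(C)=\mathrm{an}(C)\cup C$. A DAG is a DG without directed cycles. $\delta$-separation: for a DG $D$ on $V\cup W$ and $B\subseteq V\cup W$, $D^B$ is obtained from $D$ by deleting every edge $i\to j$ with $i\in B$. For disjoint $A,B,C$, $B$ is $\delta$-separated from $A$ given $C$ in $D$ if every path in $D^B$ between a node of $A$ and a node of $B$ contains a noncollider in $C$ or a collider not in $\mathrm{an}_D(C)\cup C$ (ancestors computed in $D$). $d$-separation in a DAG is the same condition applied to paths in the DAG itself (no edge deletion), and is symmetric. Unrolling: for a DG $D$ on $V\cup W$ ($W$ = baseline nodes), its unrolled version on $t'$ lags is the DAG $D_{t'}$ on nodes $V^{t'}\cup W^{t'}$, $V^{t'}=\bigcup_{i\in V}\{\nu_0^i,\dots,\nu_{t'}^i\}$, $W^{t'}=\{\nu_0^i:i\in W\}$, with $\nu_s^i\to\nu_t^j$ iff $s<t$ and $i\to j$ in $D$. Rolling: for a DAG $D_{t'}$ on such a node set, its rolled version is the DG $D$ on $V\cup W$ with $i\to j$ iff $\nu_s^i\to\nu_t^j$ in $D_{t'}$ for some $s<t$. An edge $\nu_s^i\to\nu_t^j$ is contemporaneous if $s=t$. The pair $(D,D_{t'})$ is proper if $D$ is the rolled version of $D_{t'}$ or $D_{t'}$ is the unrolled version of $D$. Node $\nu_s^i$ represents the random variable $X_s^i$; for a node set $a$, $x^a$ is the corresponding set of variables; $\nu_t^A=\{\nu_t^i:i\in A\}$, $\bar\nu_t^A=\{\nu_s^i:i\in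 A,s\le t\}$. The $d$-separation Markov property holds in $D_{t'}$ if for all disjoint node sets $a,b,c$, $a$ and $b$ $d$-separated by $c$ in $D_{t'}$ implies $x^a$ and $x^b$ conditionally independent given $x^c$. *)

From HB Require Import structures.
From mathcomp Require Import all_boot all_order all_algebra.
From mathcomp Require Import all_classical all_reals all_analysis.
Set Implicit Arguments. Unset Strict Implicit. Unset Printing Implicit Defensive.
Import Order.TTheory GRing.Theory Num.Theory.
Local Open Scope ring_scope.

Section Graphs.
Variable N : finType.

(* A walk starting at x is a list of steps (b, y): b = true means the edge
   prev -> y is used, b = false means the edge prev <- y (i.e. y -> prev). *)
Fixpoint walk_ok (e : rel N) (x : N) (s : seq (bool * N)) : bool :=
  match s with
  | [::] => true
  | (b, y) :: s' => (if b then e x y else e y x) && walk_ok e y s'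
  end.

Definition walk_nodes (x : N) (s : seq (bool * N)) : seq N := x :: map snd s.

Definition walk_end (x : N) (s : seq (bool * N)) : N := last x (map snd s).

Definition is_path (e : rel N) (x : N) (s : seq (bool * N)) : bool :=
  walk_ok e x s && uniq (walk_nodes x s).

(* non-endpoint nodes k with (incoming-edge orientation, outgoing-edge
   orientation): b1 = true iff the edge before k points into k,
   b2 = true iff the edge after k points away from k *)
Fixpoint internal_aux (st : bool * N) (s : seq (bool * N)) : seq (N * bool * bool) :=
  match s with
  | [::] => [::]
  | (b2, y) :: s' => (st.2, st.1, b2) :: internal_aux (b2, y) s'
  end.

Definition internal (s : seq (bool * N)) : seq (N * bool * bool) :=
  match s with [::] => [::] | st :: s' => internal_aux st s' end.

Definition collider (b1 b2 : bool) : bool := b1 && ~~ b2.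

Definition anc (e : rel N) (C : {set N}) : {set N} :=
  [set k | [exists c in C, (k != c) && connect e k c]].

Definition blocked (eA : rel N) (C : {set N}) (s : seq (bool * N)) : bool :=
  has (fun q : N * bool * bool =>
         let: (k, b1, b2) := q in
         if collider b1 b2 then k \notin (anc eA C :|: C) else k \in C)
      (internal s).

Definition dsep (e : rel N) (A B C : {set N}) : Prop :=
  forall (a : N) (s : seq (bool * N)), a \in A -> walk_end a s \in B ->
    is_path e a s -> blocked e C s.

Definition del_out (e : rel N) (B : {set N}) : rel N :=
  fun i j => (i \notin B) && e i j.

Definition deltasep (e : rel N) (A B C : {set N}) : Prop :=
  forall (a : N) (s : seq (bool * N)), a \in A -> walk_end a s \in B ->
    is_path (del_out e B) a s -> blocked e C s.

Definition acyclic (e : rel N) : Prop := forall u v, e u v -> ~~ connect e v u.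
End Graphs.

(* Unrolled node set V^{t'} u W^{t'}: coordinate i at time s <= t',     *)
(* baseline nodes (i in W) only at time 0.                             *)
Definition unode (I : finType) (W : {set I}) (tp : nat) : finType :=
  {p : I * 'I_tp.+1 | (p.1 \notin W) || (val p.2 == 0%N)}.

Definition ucoord (I : finType) (W : {set I}) (tp : nat) (u : @unode I W tp) : I := (val u).1.
Definition utime (I : finType) (W : {set I}) (tp : nat) (u : @unode I W tp) : nat := val (val u).2.

Definition ts_dag (I : finType) (W : {set I}) (tp : nat) (Dt : rel (@unode I W tp)) : Prop :=
  acyclic Dt /\ (forall u v, Dt u v -> (utime u <= utime v)%N).

Definition no_contemporaneous (I : finType) (W : {set I}) (tp : nat) (Dt : rel (@unode I W tp)) : Prop :=
  forall u v, Dt u v -> utime u != utime v.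

Definition rolled (I : finType) (W : {set I}) (tp : nat) (Dt : rel (@unode I W tp)) (D : rel I) : Prop :=
  forall i j, D i j = [exists u, exists v,
    [&& Dt u v, ucoord u == i, ucoord v == j & (utime u < utime v)%N]].

Definition unrolled (I : finType) (W : {set I}) (tp : nat) (D : rel I) (Dt : rel (@unode I W tp)) : Prop :=
  forall u v, Dt u v = ((utime u < utime v)%N && D (ucoord u) (ucoord v)).

Definition proper_pair (I : finType) (W : {set I}) (tp : nat) (D : rel I) (Dt : rel (@unode I W tp)) : Prop :=
  rolled Dt D \/ unrolled D Dt.

Section CI.
Local Open Scope classical_set_scope.
Context {d : measure_display} {T : measurableType d} {R : realType}.
Variable P : probability T R.

Definition sigma_of (K : Type) (Y : K -> T -> R) (a : set K) : set (set T) :=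
  <<s [set E | exists k, a k /\ exists U : set R, measurable U /\ E = Y k @^-1` U] >>.

(* (Y k)_{k in a} and (Y k)_{k in b} are conditionally independent given
   (Y k)_{k in c}: for every event E in sigma(Y^a), the conditional
   probability P(E | Y^b, Y^c) admits a sigma(Y^c)-measurable version *)
Definition cond_indep (K : Type) (Y : K -> T -> R) (a b c : set K) : Prop :=
  forall E, sigma_of Y a E ->
    exists h : T -> R,
      (forall U : set R, measurable U -> sigma_of Y c (h @^-1` U)) /\
      (forall w, 0 <= h w <= 1) /\
      (forall H, sigma_of Y (b `|` c) H ->
          P (E `&` H) = (\int[P]_(w in H) (h w)%:E)%E).
End CI.

Section TS.
Local Open Scope classical_set_scope.
Context {d : measure_display} {T : measurableType d} {R : realType}.
Variable P : probability T R.
Variables (I : finType) (W : {set I}).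
(* X i s = X_s^i; for i in W (baseline) only s = 0 is meaningful *)
Variable X : I -> nat -> {RV P >-> R}.

Definition Xfam (p : I * nat) : T -> R := X p.1 p.2.

Definition past (A : {set I}) (t : nat) : set (I * nat) :=
  [set p | p.1 \in A /\ (p.2 <= t)%N /\ (p.1 \in W -> p.2 = 0%N)].

Definition present (B : {set I}) (t : nat) : set (I * nat) :=
  [set p | p.1 \in B /\ p.2 = t].

Definition loc_indep (A B C : {set I}) (tp : nat) : Prop :=
  forall t, (1 <= t <= tp)%N ->
    cond_indep P Xfam (past A t.-1) (present B t) (past (B :|: C) t.-1).

Definition Xnode (tp : nat) (u : @unode I W tp) : T -> R := X (ucoord u) (utime u).

Definition dsep_markov (tp : nat) (Dt : rel (@unode I W tp)) : Prop :=
  forall a b c : {set @unode I W tp},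
    a :&: b = finset.set0 -> a :&: c = finset.set0 -> b :&: c = finset.set0 ->
    dsep Dt a b c ->
    cond_indep P (@Xnode tp) (fun u => u \in a) (fun u => u \in b) (fun u => u \in c).
End TS.

From HB Require Import structures.
From mathcomp Require Import all_boot all_order all_algebra.
From mathcomp Require Import all_classical all_reals all_analysis.
Set Implicit Arguments. Unset Strict Implicit. Unset Printing Implicit Defensive.

(* Fix 1 <= t <= t' and take, in the unrolled DAG, the past of A (nodes of A
   before time t), the present of B (nodes of B at time t) and the conditioning
   set c, the past of B u C.  Suppose a path from the first to the second is
   open given c.  Edges of the unrolled DAG go strictly forward in time, and an
   open collider is an ancestor of c, hence lies before t; so every node of the
   path except its endpoint lies before t.  Projecting the path onto the rolled
   graph D then gives a walk from A to B that never leaves a node of B along an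
   outgoing edge, i.e. a walk in D^B, on which colliders are ancestors of B u C
   and noncolliders avoid B u C.  A collider that reaches B but not C is
   replaced by its directed path into B, and loops are cut out; the result is a
   path in D^B from A to B open given C, contradicting delta-separation.  So the
   d-separation Markov property applies, and the resulting conditional
   independence depends only on the generated sigma-algebras, which are those of
   the corresponding variables of the time series. *)

Section Walks.
Variable N : finType.
Implicit Types (e : rel N) (C : {set N}) (x : N) (s : seq (bool * N)).

Definition active e C (q : N * bool * bool) : bool :=
  let: (k, b1, b2) := q in
  if collider b1 b2 then [exists z in C, connect e k z] else k \notin C.

(* The start [x] is treated as an interior node entered with orientation [bp];
   for [bp = false] it is a noncollider, so activity at [x] means [x \notin C]. *)
Definition active_walk e C (bp : bool) x s : bool :=
  all (active e C) (internal_aux (bp, x) s).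

Lemma activeE e C k b1 b2 : active e C (k, b1, b2) =
  if collider b1 b2 then [exists z in C, connect e k z] else k \notin C.
Proof. by []. Qed.

Lemma active_walk_cons e C bp x b y s :
  active_walk e C bp x ((b, y) :: s) = active e C (x, bp, b) && active_walk e C b y s.
Proof. by []. Qed.

Lemma active_walk_internal e C bp x s :
  active_walk e C bp x s -> all (active e C) (internal s).
Proof. by case: s => [|[b y] s] //= /andP []. Qed.

Lemma active_walk_false e C x s :
  x \notin C -> active_walk e C false x s = all (active e C) (internal s).
Proof.
move=> xC; case: s => [|[b y] s] //.
by rewrite active_walk_cons activeE /collider /= xC.
Qed.

Lemma active_walk_start e C x s :
  active_walk e C false x s -> s != [::] -> x \notin C.
Proof. by case: s => [|[b y] s] // /andP []. Qed.

Lemma mem_anc_setU e C k : (k \in anc e C :|: C) = [exists z in C, connect e k z].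
Proof.
rewrite finset.in_setU inE; apply/orP/existsP.
  case=> [/existsP [z /and3P [zC _ kz]] | kC]; first by exists z; rewrite zC.
  by exists k; rewrite kC connect0.
case=> z /andP [zC kz]; have [->|kNz] := eqVneq k z; first by right.
by left; apply/existsP; exists z; rewrite zC kNz.
Qed.

Lemma blockedNE e C s : ~~ blocked e C s = all (active e C) (internal s).
Proof.
rewrite /blocked -all_predC; apply: eq_all => -[[k b1] b2] /=.
by rewrite /active mem_anc_setU; case: collider; rewrite ?negbK.
Qed.

Lemma walk_ok_cat e x s1 s2 :
  walk_ok e x (s1 ++ s2) = walk_ok e x s1 && walk_ok e (walk_end x s1) s2.
Proof. by elim: s1 x => [|[b y] s1 IH] x //=; rewrite IH andbA. Qed.

Lemma internal_aux_cat (st st' : bool * N) s1 s2 :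
  internal_aux st (s1 ++ st' :: s2) =
  internal_aux st (rcons s1 st') ++ internal_aux st' s2.
Proof. by case: st' => b y; elim: s1 st => [|[b1 y1] s1 IH] st //=; rewrite IH. Qed.

Lemma split_last_occurrence x s : x \in map snd s ->
  exists s1 b s2, s = s1 ++ (b, x) :: s2 /\ x \notin map snd s2.
Proof.
elim: s => [|[b y] s IH] //=; rewrite in_cons.
have [/IH [s1 [b1 [s2 [-> xNs2]]]] _ | xNs /=] := boolP (x \in map snd s).
  by exists ((b, y) :: s1), b1, s2.
by rewrite orbF => /eqP <-; exists [::], b, s.
Qed.

Section Shorten.
Variables (e eD : rel N) (C : {set N}).
Hypothesis sub_e : subrel e eD.

(* Following the walk forward from [x], the first backward edge creates a
   collider, which reaches [C]; hence so does [x]. *)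
Lemma active_forward_reaches x s :
  walk_ok e x s -> has (fun st => ~~ st.1) s -> active_walk eD C true x s ->
  [exists z in C, connect eD x z].
Proof.
elim: s x => [|[[] y] s IH] x //=; last by move=> _ _ /andP [].
move=> /andP [exy wy] hs /andP [_ /(IH y wy hs) /existsP [z /andP [zC yz]]].
apply/existsP; exists z; rewrite zC /=.
by apply: connect_trans yz; apply/connect1/sub_e.
Qed.

Lemma active_walk_cut_loop bp x s1 b s2 :
  walk_ok e x (s1 ++ (b, x) :: s2) -> active_walk eD C bp x (s1 ++ (b, x) :: s2) ->
  active_walk eD C bp x s2.
Proof.
case: s2 => [|[c w] s2] // ws; rewrite active_walk_cons => hs; move: (hs).
rewrite /active_walk internal_aux_cat all_cat /= => /and3P [_ hx ->]; rewrite andbT.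
have [/andP [bpT cF]|ncol] := boolP (collider bp c).
  rewrite bpT in hs; apply: (active_forward_reaches ws _ hs); apply/hasP.
  by exists (false, w); rewrite // -(negbTE cF) mem_cat !in_cons eqxx !orbT.
move: hx; case: (boolP (collider b c)) => [/andP [_ cF] _|//].
move: ncol hs; rewrite /collider cF andbT => /negbTE ->.
by move/active_walk_start; apply; case: s1 {ws}.
Qed.

Lemma active_walk_shorten bp x s :
  walk_ok e x s -> active_walk eD C bp x s ->
  exists s', [/\ is_path e x s', active_walk eD C bp x s',
    walk_end x s' = walk_end x s & {subset walk_nodes x s' <= walk_nodes x s}].
Proof.
have [n] := ubnP (size s); elim: n => // n IH in bp x s *; rewrite ltnS => sz ws hs.
have [/split_last_occurrence [s1 [b [s2 [Es _]]]]|xNs] := boolP (x \in map snd s).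
  have ws2 : walk_ok e x s2.
    by move: ws; rewrite Es walk_ok_cat => /and3P [_ _].
  have hs2 : active_walk eD C bp x s2.
    by move: ws hs; rewrite Es; apply: active_walk_cut_loop.
  have sz2 : size s2 < n.
    by apply: leq_trans sz; rewrite Es size_cat /= addnS ltnS leq_addl.
  have [s' [ps' hs' end' sub']] := IH bp x s2 sz2 ws2 hs2.
  exists s'; split => //; first by rewrite end' Es /walk_end map_cat last_cat.
  move=> z /sub'; rewrite !in_cons => /orP [->//|zs2].
  by rewrite Es map_cat mem_cat /= in_cons zs2 !orbT.
case: s sz ws hs xNs => [|[b y] s]; first by exists [::]; split.
move=> sz /= /andP [exy ws]; rewrite active_walk_cons => /andP [hx hs] xNs.
have [s' [/andP [ws' us'] hs' end' sub']] := IH b y s sz ws hs.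
exists ((b, y) :: s'); split => //.
- rewrite /is_path /= exy ws' /=; rewrite /walk_nodes /= in us' *; rewrite us' andbT.
  by apply: contra xNs => /sub'.
- by rewrite active_walk_cons hx.
- move=> z; rewrite /walk_nodes /= !in_cons => /orP [->//|/sub'].
  by rewrite /walk_nodes in_cons => ->; rewrite orbT.
Qed.

End Shorten.

Section Redirect.
Variables (D : rel N) (B C : {set N}).

Lemma directed_walk_to x p :
  path D x p -> last x p \in B -> ~~ [exists z in C, connect D x z] ->
  exists s, [/\ walk_ok (del_out D B) x s, active_walk D C true x s & walk_end x s \in B].
Proof.
elim: p x => [|y p IH] x /=; first by exists [::]; split.
move=> /andP [Dxy py] pB xNC; have [xB|xNB] := boolP (x \in B); first by exists [::]; split.
have yNC : ~~ [exists z in C, connect D y z].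
  apply: contra xNC => /existsP [z /andP [zC yz]]; apply/existsP; exists z.
  by rewrite zC (connect_trans (connect1 Dxy) yz).
have [s [ws hs sB]] := IH y py pB yNC.
exists ((true, y) :: s); split => //=; first by rewrite /del_out xNB Dxy.
rewrite active_walk_cons hs andbT activeE /collider /=.
by apply: contra xNC => xC; apply/existsP; exists x; rewrite xC connect0.
Qed.

(* A collider that reaches [B] but not [C] is replaced by its directed path to
   [B]; on that path the collider becomes a noncollider outside [C]. *)
Lemma active_walk_redirect bp x s :
  walk_ok (del_out D B) x s -> active_walk D (B :|: C) bp x s -> walk_end x s \in B ->
  exists s', [/\ walk_ok (del_out D B) x s', active_walk D C bp x s' & walk_end x s' \in B].
Proof.
elim: s bp x => [|[b y] s IH] bp x /=; first by exists [::]; split.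
move=> /andP [exy ws]; rewrite active_walk_cons => /andP [hx hs] sB.
have keep : active D C (x, bp, b) ->
    exists s', [/\ walk_ok (del_out D B) x s', active_walk D C bp x s' & walk_end x s' \in B].
  move=> hx'; have [s' [ws' hs' sB']] := IH b y ws hs sB.
  by exists ((b, y) :: s'); split; rewrite //= ?exy ?active_walk_cons ?hx'.
move: hx; rewrite !activeE; case: ifP => col; last first.
  by rewrite finset.in_setU negb_or => /andP [_ xNC]; apply: keep; rewrite activeE col.
have [xC|xNC] := boolP [exists z in C, connect D x z].
  by move=> _; apply: keep; rewrite activeE col.
case/existsP=> z /andP [zBC xz].
have zB : z \in B.
  move: zBC; rewrite finset.in_setU => /orP [//|zC]; case/negP: xNC.
  by apply/existsP; exists z; rewrite zC.
have [p px zE] := connectP xz.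
by move: col => /andP [-> _]; apply: (directed_walk_to px); rewrite -?zE.
Qed.

Lemma deltasep_no_active_walk A x s :
  deltasep D A B C -> x \in A ->
  walk_ok (del_out D B) x s -> active_walk D (B :|: C) false x s -> walk_end x s \in B ->
  False.
Proof.
move=> sepD xA ws hs sB.
have [s1 [ws1 hs1 sB1]] := active_walk_redirect ws hs sB.
have subD : subrel (del_out D B) D by move=> i j /andP [].
have [s2 [ps2 hs2 end2 _]] := active_walk_shorten subD ws1 hs1.
have := sepD x s2 xA; rewrite end2 => /(_ sB1 ps2); apply/negP.
by rewrite blockedNE; apply: active_walk_internal hs2.
Qed.

End Redirect.

End Walks.

Section Projection.
Variables (N' I : finType) (coord : N' -> I) (time : N' -> nat).
Variables (Dt : rel N') (D : rel I).
Hypothesis edge_proj : forall u v, Dt u v -> time u < time v /\ D (coord u) (coord v).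

Definition before (Z : {set I}) t : {set N'} := [set u | (coord u \in Z) && (time u < t)].
Definition at_time (Z : {set I}) t : {set N'} := [set u | (coord u \in Z) && (time u == t)].
Definition proj_walk (s : seq (bool * N')) : seq (bool * I) :=
  map (fun st => (st.1, coord st.2)) s.

Lemma walk_end_proj x s : walk_end (coord x) (proj_walk s) = coord (walk_end x s).
Proof. by elim: s x => [|[b y] s IH] x //=; rewrite /walk_end /= -IH. Qed.

Lemma before_at_time_setI (Z Z' : {set I}) t :
  before Z t :&: at_time Z' t = finset.set0.
Proof. by apply/finset.setP => u; rewrite !inE; case: eqP => [->|]; rewrite ?ltnn !andbF. Qed.

Lemma before_setIU (A B C : {set I}) t : [disjoint A & B] -> [disjoint A & C] ->
  before A t :&: before (B :|: C) t = finset.set0.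
Proof.
move=> AB AC; apply/finset.setP => u; rewrite !inE.
case uA: (coord u \in A); last by [].
by rewrite (disjointFr AB uA) (disjointFr AC uA) andbF.
Qed.

Lemma before_notin Z t u : u \notin before Z t -> time u < t -> coord u \notin Z.
Proof. by rewrite inE negb_and => /orP [//|/negP]. Qed.

Lemma connect_proj u w :
  connect Dt u w -> time u <= time w /\ connect D (coord u) (coord w).
Proof.
case/connectP=> p + ->; elim: p u => [|v p IH] u /=; first by rewrite connect0.
case/andP=> /edge_proj [tuv Duv] /IH [tvw vw]; split; first exact: ltnW (leq_trans tuv tvw).
exact: connect_trans (connect1 Duv) vw.
Qed.

Variables (B C : {set I}) (t : nat).
Local Notation c := (before (B :|: C) t).

Lemma anc_before k :
  k \in anc Dt c :|: c -> time k < t /\ [exists z in B :|: C, connect D (coord k) z].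
Proof.
rewrite mem_anc_setU => /existsP [z /andP [+ /connect_proj [tkz kz]]].
rewrite inE => /andP [zBC tz]; split; first exact: leq_ltn_trans tkz tz.
by apply/existsP; exists (coord z); rewrite zBC.
Qed.

(* Time increases along forward edges, and a backward edge would create a
   collider, which lies before [t] as an ancestor of [c]. *)
Lemma active_forward_late x s :
  walk_ok Dt x s -> t <= time x -> active_walk Dt c true x s -> s != [::] ->
  t < time (walk_end x s).
Proof.
elim: s x => [|[b y] s IH] x //= + tx; rewrite active_walk_cons => + /andP [hx hs] _.
case: b hx hs => hx hs /andP [exy ws]; last first.
  by move: hx; rewrite activeE /collider /= -mem_anc_setU => /anc_before []; rewrite ltnNge tx.
have ty : t < time y := leq_ltn_trans tx (edge_proj exy).1.
by case: s {IH ws hs} (IH y ws (ltnW ty) hs) => [|st s] //; apply.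
Qed.

(* Invariant: the current node lies before [t] unless it was entered along a
   forward edge; in that case [active_forward_late] rules out a late node. *)
Lemma proj_active_walk bp x s :
  walk_ok Dt x s -> active_walk Dt c bp x s -> bp || (time x < t) ->
  time (walk_end x s) = t ->
  walk_ok (del_out D B) (coord x) (proj_walk s) /\
  active_walk D (B :|: C) bp (coord x) (proj_walk s).
Proof.
elim: s bp x => [|[b y] s IH] bp x //=.
move=> /andP [exy ws]; rewrite active_walk_cons => /andP [hx hs] inv end_t.
have tx : time x < t.
  case: (ltnP (time x) t) inv => // tx; rewrite orbF => bpT.
  move: (hx) (hs); rewrite bpT => hx' hs'.
  have := active_forward_late (x := x) (s := (b, y) :: s).
  by rewrite /= exy ws active_walk_cons hx' hs' end_t ltnn => /(_ isT tx isT isT).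
have inv_y : b || (time y < t).
  by move: exy; case: (b) => //= eyx; apply: ltn_trans tx; apply: (edge_proj eyx).1.
have [ws' hs'] := IH b y ws hs inv_y end_t.
rewrite /= ws' active_walk_cons hs' !andbT; split; last first.
  move: hx; rewrite !activeE; case: ifP => _.
    by rewrite -(mem_anc_setU Dt) => /anc_before [].
  by move/before_notin; apply.
have src_notin u : u \notin c -> time u < t -> coord u \notin B.
  by move/before_notin/[apply]; rewrite finset.in_setU negb_or => /andP [].
case: b exy hx hs inv_y end_t {IH ws ws' hs'} => exy hx hs inv_y end_t.
  rewrite /del_out (edge_proj exy).2 andbT; apply: src_notin tx.
  by move: hx; rewrite activeE /collider andbF.
rewrite /del_out (edge_proj exy).2 andbT; apply: src_notin (inv_y).
apply: active_walk_start hs _; case: s end_t => // end_t.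
by move: inv_y; rewrite end_t ltnn.
Qed.

Lemma dsep_before_at_time (A : {set I}) :
  [disjoint A & B] -> [disjoint A & C] -> deltasep D A B C ->
  dsep Dt (before A t) (at_time B t) c.
Proof.
move=> AB AC sepD x s + + /andP [ws _]; rewrite !inE => /andP [xA tx] /andP [sB /eqP end_t].
apply/negPn/negP; rewrite blockedNE => hs.
have xNc : x \notin c by rewrite inE finset.in_setU (disjointFr AB xA) (disjointFr AC xA).
rewrite -(active_walk_false _ _ xNc) in hs.
have [ws' hs'] := proj_active_walk ws hs tx end_t.
by apply: (deltasep_no_active_walk sepD xA ws' hs'); rewrite walk_end_proj.
Qed.
End Projection.

Section Transfer.
Local Open Scope classical_set_scope.
Context {d : measure_display} {T : measurableType d} {R : realType}.

Lemma sigma_of_comp (K K' : Type) (Y : K -> T -> R) (f : K' -> K) (a : set K') :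
  sigma_of (Y \o f) a = sigma_of Y (f @` a).
Proof.
rewrite /sigma_of; congr (<<s _ >>); apply/seteqP; split=> E /= [k [ak [U [mU ->]]]].
  by exists (f k); split; [exists k | exists U].
by case: ak => k' ak' <-; exists k'; split => //; exists U.
Qed.

Lemma cond_indep_comp (P : probability T R) (K K' : Type) (Y : K -> T -> R) (f : K' -> K)
    (a b c : set K') :
  cond_indep P (Y \o f) a b c -> cond_indep P Y (f @` a) (f @` b) (f @` c).
Proof. by rewrite /cond_indep !(sigma_of_comp Y f) image_setU. Qed.
End Transfer.

Section Unrolled.
Variables (I : finType) (W : {set I}) (tp : nat).
Implicit Types (u v : @unode I W tp) (Z : {set I}).
Local Notation coord := (@ucoord I W tp).
Local Notation time := (@utime I W tp).

Definition node_index u : I * nat := (coord u, time u).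

Lemma utime_baseline u : coord u \in W -> time u = 0%N.
Proof. by move=> uW; move: (valP u); rewrite /ucoord in uW; rewrite uW => /eqP. Qed.

Lemma node_index_surj i s : (s <= tp)%N -> (i \in W -> s = 0%N) ->
  exists u, node_index u = (i, s).
Proof.
move=> stp sW; have s_lt : (s < tp.+1)%N by [].
have iWs : (i \notin W) || (s == 0%N) by case: (i \in W) sW => // /(_ isT) ->.
by exists (exist _ (i, Ordinal s_lt) iWs).
Qed.

Lemma unrolled_edge_proj D (Dt : rel (@unode I W tp)) :
  ts_dag Dt -> proper_pair D Dt -> no_contemporaneous Dt ->
  forall u v, Dt u v -> (time u < time v)%N /\ D (coord u) (coord v).
Proof.
move=> [_ mono] [rollD|unrollD] nc u v uv.
  have lt : (time u < time v)%N by rewrite ltn_neqAle nc // mono.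
  split=> //; rewrite rollD; apply/existsP; exists u; apply/existsP; exists v.
  by rewrite uv !eqxx.
by move: uv; rewrite unrollD => /andP [].
Qed.

Section Images.
Local Open Scope classical_set_scope.

Lemma image_before Z t : (0 < t <= tp.+1)%N ->
  node_index @` [set u | u \in before coord time Z t] = past W Z t.-1.
Proof.
case/andP=> t_gt0 t_le; apply/seteqP; split=> [_ [u + <-]|[i s] /= [iZ [st sW]]].
  rewrite /= inE => /andP [uZ ut]; split=> //; split; last exact: utime_baseline.
  by rewrite -ltnS prednK.
have st' : (s < t)%N by rewrite -(prednK t_gt0) ltnS.
have [u uE] := node_index_surj (leq_trans st' t_le) sW.
by exists u => //; case: uE; rewrite inE /node_index => -> ->; rewrite iZ st'.
Qed.

Lemma image_at_time Z t : Z \subset ~: W -> (t <= tp)%N ->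
  node_index @` [set u | u \in at_time coord time Z t] = present Z t.
Proof.
move=> ZW t_le; apply/seteqP; split=> [_ [u + <-]|[i s] [/= iZ /= ->]].
  by rewrite /= inE => /andP [uZ /eqP ut].
have iNW : i \notin W by rewrite -finset.in_setC (fintype.subsetP ZW).
have sW : i \in W -> t = 0%N by move=> iW; rewrite iW in iNW.
have [u uE] := node_index_surj t_le sW.
by exists u => //; case: uE; rewrite inE /node_index => -> ->; rewrite iZ eqxx.
Qed.

End Images.

Variables (d : measure_display) (T : measurableType d) (R : realType).
Variables (P : probability T R) (X : I -> nat -> {RV P >-> R}).

Lemma cond_indep_past_present (D : rel I) (Dt : rel (@unode I W tp)) (A B C : {set I}) t :
  (forall u v, Dt u v -> (time u < time v)%N /\ D (coord u) (coord v)) ->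
  dsep_markov X Dt -> [disjoint A & B] -> [disjoint A & C] -> B \subset ~: W ->
  deltasep D A B C -> (0 < t <= tp)%N ->
  cond_indep P (Xfam X) (past W A t.-1) (present B t) (past W (B :|: C) t.-1).
Proof.
move=> edge markov AB AC BW sepD /andP [t_gt0 t_le].
have ab := before_at_time_setI coord time A B t.
have bc : at_time coord time B t :&: before coord time (B :|: C) t = finset.set0.
  by rewrite finset.setIC before_at_time_setI.
have := markov _ _ _ ab (before_setIU coord time t AB AC) bc
  (dsep_before_at_time edge (t := t) AB AC sepD).
move/(@cond_indep_comp _ _ _ P _ _ (Xfam X) node_index).
by rewrite !image_before ?image_at_time ?t_gt0 // ltnW.
Qed.
End Unrolled.

Unset Implicit Arguments.

Theorem proposition1 (d : measure_display) (T : measurableType d) (R : realType)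
  (P : probability T R) (I : finType) (W : {set I})
  (X : I -> nat -> {RV P >-> R}) (tp : nat) (D : rel I) (Dt : rel (@unode I W tp))
  (A B C : {set I}) :
  (1 <= tp)%N ->
  ts_dag Dt -> proper_pair D Dt -> no_contemporaneous Dt ->
  dsep_markov X Dt ->
  [disjoint A & B] -> [disjoint A & C] -> [disjoint B & C] ->
  B \subset ~: W ->
  deltasep D A B C ->
  loc_indep W X A B C tp.
Proof.
move=> _ dag pp nc markov AB AC _ BW sepD t.
exact: cond_indep_past_present (unrolled_edge_proj dag pp nc) markov AB AC BW sepD.
Qed.
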